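(* Let $s,y\in\mathbb{R}^n$ with $s^Ty>0$, let $\alpha^{BB1}=\dfrac{s^Ts}{s^Ty}$ and $\alpha^{BB2}=\dfrac{s^Ty}{y^Ty}$, and for $\gamma\in[0,1]$ let $\alpha=\gamma\alpha^{BB1}+(1-\gamma)\alpha^{BB2}$. Then there exists $\tau\in[0,1]$ such that $D=\alpha I$ is a solution of $$\min_{D=\beta I,\ \beta>0}\ \big\|\tau(D^{-1}s-y)+(1-\tau)(s-Dy)\big\| ,$$ where $I$ is the $n\times n$ identity matrix.
   Context: $\|\cdot\|$ is the Euclidean norm. In the paper, $s=s_{k-1}=x_k-x_{k-1}$ and $y=y_{k-1}=g_k-g_{k-1}$ are differences of consecutive iterates and gradients, and $\alpha^{BB1},\alpha^{BB2}$ are the long and short Barzilai–Borwein stepsizes. *)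

From HB Require Import structures.
From mathcomp Require Import all_boot all_order all_algebra.
Set Implicit Arguments. Unset Strict Implicit. Unset Printing Implicit Defensive.
Import Order.TTheory GRing.Theory Num.Theory.
Local Open Scope ring_scope.

Definition dotv (R : rcfType) (n : nat) (u v : 'cV[R]_n) : R := (u^T *m v) 0 0.

Definition enorm (R : rcfType) (n : nat) (v : 'cV[R]_n) : R := Num.sqrt (dotv v v).

Definition alpha_BB1 (R : rcfType) (n : nat) (s y : 'cV[R]_n) : R := dotv s s / dotv s y.
Definition alpha_BB2 (R : rcfType) (n : nat) (s y : 'cV[R]_n) : R := dotv s y / dotv y y.

Definition bb_obj (R : rcfType) (n : nat) (s y : 'cV[R]_n) (tau beta : R) : R :=
  let D : 'M[R]_n := beta%:M in
  enorm (tau *: (invmx D *m s - y) + (1 - tau) *: (s - D *m y)).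

From HB Require Import structures.
From mathcomp Require Import all_boot all_order all_algebra.
From mathcomp Require Import ring lra.
Import Order.TTheory GRing.Theory Num.Theory.
Set Implicit Arguments. Unset Strict Implicit. Unset Printing Implicit Defensive.
Local Open Scope ring_scope.

(* With D = beta I the residual is (tau/beta + 1 - tau) (s - beta y). Put r = s - alpha y
   and pick tau in [0,1] with tau <r, s> + (1 - tau) alpha^2 <r, y> = 0: this makes alpha
   a stationary point of the squared objective. The residual at beta differs from the one
   at alpha by (beta - alpha) (- tau/(alpha beta) s - (1 - tau) y), and stationarity turns
   the inner product of this difference with the residual at alpha into a nonnegative
   multiple of <r, s>; hence the residual can only grow. Such a tau exists because
   alpha <= BB1 gives <r, s> >= 0 and alpha >= BB2 gives <r, y> <= 0, the interval
   [BB2, BB1] being nonempty by Cauchy-Schwarz. *)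

Lemma convex_comb_between (R : realDomainType) (g x z : R) :
  0 <= g -> g <= 1 -> x <= z -> x <= g * z + (1 - g) * x <= z.
Proof.
move=> g0 g1 xz.
have zx0 : 0 <= z - x by rewrite subr_ge0.
have g1' : 0 <= 1 - g by rewrite subr_ge0.
have lo := mulr_ge0 g0 zx0; have hi := mulr_ge0 g1' zx0.
by apply/andP; split; lra.
Qed.

Lemma balancing_weight (R : realFieldType) (U N : R) : 0 <= U -> 0 <= N ->
  0 <= N / (U + N) <= 1 /\ N / (U + N) * U = (1 - N / (U + N)) * N.
Proof.
(* If [U + N = 0] then [U = N = 0] and the weight is [N / 0 = 0]. *)
move=> U0 N0; have [UN0 | UN_gt0] := leP (U + N) 0.
  have [-> ->] : U = 0 /\ N = 0 by split; lra.
  by rewrite !mul0r mulr0 lexx ler01.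
split.
  by rewrite divr_ge0 ?addr_ge0 //= ler_pdivrMr // mul1r lerDr.
by field; rewrite gt_eqF.
Qed.

Section InnerProduct.
Variables (R : rcfType) (n : nat).
Implicit Types (u v w : 'cV[R]_n) (a : R).

Lemma dotvE u v : dotv u v = \sum_i u i 0 * v i 0.
Proof. by rewrite /dotv mxE; apply: eq_bigr => i _; rewrite mxE. Qed.

Lemma dotvC u v : dotv u v = dotv v u.
Proof. by rewrite !dotvE; apply: eq_bigr => i _; rewrite mulrC. Qed.

Lemma dotvDl u v w : dotv (u + v) w = dotv u w + dotv v w.
Proof. by rewrite /dotv linearD /= mulmxDl mxE. Qed.

Lemma dotvBl u v w : dotv (u - v) w = dotv u w - dotv v w.
Proof. by rewrite /dotv linearB /= mulmxBl !mxE. Qed.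

Lemma dotvZl a u v : dotv (a *: u) v = a * dotv u v.
Proof. by rewrite /dotv linearZ /= -scalemxAl mxE. Qed.

Lemma dotvDr u v w : dotv u (v + w) = dotv u v + dotv u w.
Proof. by rewrite dotvC dotvDl !(dotvC u). Qed.

Lemma dotvBr u v w : dotv u (v - w) = dotv u v - dotv u w.
Proof. by rewrite dotvC dotvBl !(dotvC u). Qed.

Lemma dotvZr a u v : dotv u (a *: v) = a * dotv u v.
Proof. by rewrite dotvC dotvZl dotvC. Qed.

Lemma dotv0r u : dotv u 0 = 0.
Proof. by rewrite -(scale0r 0) dotvZr mul0r. Qed.

Lemma dotv_ge0 v : 0 <= dotv v v.
Proof. by rewrite dotvE sumr_ge0 // => i _; rewrite -expr2 sqr_ge0. Qed.

Lemma dotv_gt0 v : (0 < dotv v v) = (v != 0).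
Proof.
rewrite lt_def dotv_ge0 andbT; congr negb; apply/eqP/eqP => [vv0|->]; last first.
  exact: dotv0r.
apply/matrixP => i j; rewrite ord1 mxE; apply/eqP; rewrite -sqrf_eq0 expr2; apply/eqP.
by move: vv0; rewrite dotvE => /psumr_eq0P-> // k _; rewrite -expr2 sqr_ge0.
Qed.

Lemma dotv_CauchySchwarz u v : dotv u v ^+ 2 <= dotv u u * dotv v v.
Proof.
have [->|v0] := eqVneq v 0; first by rewrite !dotv0r expr0n mulr0.
have c0 : 0 < dotv v v by rewrite dotv_gt0.
have := dotv_ge0 (dotv v v *: u - dotv u v *: v).
rewrite dotvBl !dotvBr !dotvZl !dotvZr (dotvC v u).
have -> : forall a b c : R, c * (c * a) - c * (b * b) - (b * (c * b) - b * (b * c))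
    = c * (a * c - b ^+ 2) by move=> *; ring.
by rewrite pmulr_rge0 // subr_ge0.
Qed.

Lemma dotv_le_addr v e : 0 <= dotv v e -> dotv v v <= dotv (v + e) (v + e).
Proof.
move=> ve0; rewrite dotvDl !dotvDr (dotvC e v) -subr_ge0.
have -> : dotv v v + dotv v e + (dotv v e + dotv e e) - dotv v v
    = dotv v e *+ 2 + dotv e e by ring.
by rewrite addr_ge0 ?mulrn_wge0 ?dotv_ge0.
Qed.

Lemma enorm_le u v : dotv u u <= dotv v v -> enorm u <= enorm v.
Proof. by rewrite /enorm ler_sqrt ?dotv_ge0. Qed.

End InnerProduct.

Section BarzilaiBorwein.
Variables (R : rcfType) (n : nat).
Implicit Types (s y : 'cV[R]_n) (t alpha beta : R).

Lemma dotvv_gt0_of_dotv_gt0 s y : 0 < dotv s y -> 0 < dotv y y.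
Proof. by rewrite dotv_gt0; apply: contraTneq => ->; rewrite dotv0r ltxx. Qed.

Lemma alpha_BB2_gt0 s y : 0 < dotv s y -> 0 < alpha_BB2 s y.
Proof. by move=> sy0; rewrite divr_gt0 // (dotvv_gt0_of_dotv_gt0 sy0). Qed.

Lemma alpha_BB2_le_BB1 s y : 0 < dotv s y -> alpha_BB2 s y <= alpha_BB1 s y.
Proof.
move=> sy0; have yy0 := dotvv_gt0_of_dotv_gt0 sy0.
rewrite /alpha_BB1 /alpha_BB2 -subr_ge0.
have -> : dotv s s / dotv s y - dotv s y / dotv y y
    = (dotv s s * dotv y y - dotv s y ^+ 2) / (dotv s y * dotv y y).
  by field; rewrite !gt_eqF.
by rewrite divr_ge0 ?subr_ge0 ?dotv_CauchySchwarz // mulr_ge0 ?ltW.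
Qed.

Lemma dotv_resid_s_ge0 s y alpha :
  0 < dotv s y -> alpha <= alpha_BB1 s y -> 0 <= dotv (s - alpha *: y) s.
Proof.
by move=> sy0; rewrite dotvBl dotvZl (dotvC y) subr_ge0 -ler_pdivlMr.
Qed.

Lemma dotv_resid_y_le0 s y alpha :
  0 < dotv s y -> alpha_BB2 s y <= alpha -> dotv (s - alpha *: y) y <= 0.
Proof.
move=> sy0; have yy0 := dotvv_gt0_of_dotv_gt0 sy0.
by rewrite dotvBl dotvZl subr_le0 -ler_pdivrMr.
Qed.

Definition bb_vec s y t beta : 'cV[R]_n := (t / beta + (1 - t)) *: (s - beta *: y).

Lemma bb_objE s y t beta : beta != 0 -> bb_obj s y t beta = enorm (bb_vec s y t beta).
Proof.
move=> beta0; rewrite /bb_obj invmx_scalar !mul_scalar_mx; congr enorm.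
by apply/matrixP => i j; rewrite !mxE; field.
Qed.

Lemma bb_vec_shift s y t alpha beta : alpha != 0 -> beta != 0 ->
  bb_vec s y t beta =
  bb_vec s y t alpha + (beta - alpha) *: (- (t / (alpha * beta)) *: s - (1 - t) *: y).
Proof.
by move=> alpha0 beta0; apply/matrixP => i j; rewrite !mxE; field; apply/andP.
Qed.

Lemma bb_obj_min_stationary s y t alpha : 0 <= t <= 1 -> 0 < alpha ->
  0 <= dotv (s - alpha *: y) s ->
  t * dotv (s - alpha *: y) s + (1 - t) * (alpha ^+ 2 * dotv (s - alpha *: y) y) = 0 ->
  forall beta, 0 < beta -> bb_obj s y t alpha <= bb_obj s y t beta.
Proof.
move=> /andP[t0 t1] alpha0 rs0 stationary beta beta0.
rewrite !bb_objE ?gt_eqF //; apply: enorm_le.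
rewrite (bb_vec_shift s y t (lt0r_neq0 alpha0) (lt0r_neq0 beta0)); apply: dotv_le_addr.
rewrite [X in dotv X _]/bb_vec dotvZl dotvZr dotvBr !dotvZr.
set U := dotv _ s; set V := dotv _ y.
(* stationarity at [alpha] cancels the first-order term in [beta - alpha] *)
have -> : (beta - alpha) * (- (t / (alpha * beta)) * U - (1 - t) * V)
    = t * U * (beta - alpha) ^+ 2 / (alpha ^+ 2 * beta)
      - (beta - alpha) / alpha ^+ 2 * (t * U + (1 - t) * (alpha ^+ 2 * V)).
  by field; rewrite !gt_eqF.
rewrite stationary mulr0 subr0.
apply: mulr_ge0; first by rewrite addr_ge0 ?divr_ge0 ?subr_ge0 // ltW.
apply: divr_ge0; first exact: mulr_ge0 (mulr_ge0 t0 rs0) (sqr_ge0 _).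
by rewrite mulr_ge0 ?sqr_ge0 // ltW.
Qed.

End BarzilaiBorwein.

Theorem theorem1 (R : rcfType) (n : nat) (s y : 'cV[R]_n) (gamma : R) :
  0 < dotv s y -> 0 <= gamma <= 1 ->
  let alpha := gamma * alpha_BB1 s y + (1 - gamma) * alpha_BB2 s y in
  exists tau : R, 0 <= tau <= 1 /\ 0 < alpha /\
    (forall beta : R, 0 < beta -> bb_obj s y tau alpha <= bb_obj s y tau beta).
Proof.
move=> sy0 /andP[g0 g1] alpha.
have BB2_gt0 := alpha_BB2_gt0 sy0.
have BB2_le_BB1 := alpha_BB2_le_BB1 sy0.
have /andP[BB2_le_alpha alpha_le_BB1] := convex_comb_between g0 g1 BB2_le_BB1.
have alpha_gt0 : 0 < alpha := lt_le_trans BB2_gt0 BB2_le_alpha.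
have rs_ge0 := dotv_resid_s_ge0 sy0 alpha_le_BB1.
have N_ge0 : 0 <= - (alpha ^+ 2 * dotv (s - alpha *: y) y).
  by rewrite oppr_ge0 mulr_ge0_le0 ?sqr_ge0 ?dotv_resid_y_le0.
have [tau01 balance] := balancing_weight rs_ge0 N_ge0.
eexists; split; first exact: tau01.
split=> //; apply: bb_obj_min_stationary => //.
by rewrite balance mulrN addNr.
Qed.
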